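(* Let $\alpha,\beta$ be real constants with $\kappa^2=4(\alpha+\beta^2)$, $\kappa>0$. Suppose $u(x,t),v(x,t)$ solve the (rescaled) system $$\begin{cases} m_t=(\partial_x m+m\partial_x)(\kappa v_x+2\beta v-u)+n\,(\kappa u_x-2\beta u-4\alpha v)_x,\\ n_t=\big[n(\kappa v_x+2\beta v-u)\big]_x,\\ m=u_{xx}-u,\qquad n=v-v_{xx}.\end{cases}$$ Define $$p=-(\kappa n_x+2\beta n+m),\qquad \rho=\kappa n,\qquad q=-\kappa v_x-2\beta v+u.$$ Then $(p,\rho,q)$ solves the two-component Camassa–Holm equation $$\begin{cases} p_t+qp_x+2pq_x-\rho\rho_x=0,\\ \rho_t+(\rho q)_x=0,\\ p=q-q_{xx}.\end{cases}$$ That is, this is a Miura-type transformation from the first system to the two-component Camassa–Holm equation.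
   Context: $(\partial_x m+m\partial_x)w$ denotes $2mw_x+m_xw$. *)

From Stdlib Require Import Reals List.
From Coquelicot Require Import Coquelicot.
Open Scope R_scope.

Definition pDx (f : R -> R -> R) : R -> R -> R :=
  fun x t => Derive (fun y => f y t) x.
Definition pDt (f : R -> R -> R) : R -> R -> R :=
  fun x t => Derive (fun s => f x s) t.

Fixpoint iterD (w : list bool) (f : R -> R -> R) : R -> R -> R :=
  match w with
  | nil => f
  | b :: w' => (if b then pDx else pDt) (iterD w' f)
  end.

Definition smooth2 (f : R -> R -> R) : Prop :=
  forall w : list bool,
    (forall x t, ex_derive (fun y => iterD w f y t) x) /\
    (forall x t, ex_derive (fun s => iterD w f x s) t) /\
    (forall x t, continuity_2d_pt (iterD w f) x t).

(* With [w := kappa v_x + 2 beta v - u] the new velocity is [q = -w] and the new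
   momentum is [p = -P], [P := kappa n_x + 2 beta n + m].  The transport laws
   for [m] and [n] alone give
     [P_t = w P_x + 2 P w_x + n (kappa w_xx - 2 beta w_x + z_x)],
   and, precisely because [kappa^2 = 4 (alpha + beta^2)], the last bracket
   collapses to [-kappa^2 n_x], which is the [rho rho_x] term of the
   two-component Camassa-Holm system.  The relation [p = q - q_xx] holds since
   [1 - d_x^2] commutes with [d_x] and maps [u] to [-m] and [v] to [n]. *)

From Stdlib Require Import Reals List.
From Coquelicot Require Import Coquelicot.
Open Scope R_scope.

Lemma iterD_ext (w : list bool) (f g : R -> R -> R) :
  (forall x t, f x t = g x t) -> forall x t, iterD w f x t = iterD w g x t.
Proof.
  revert f g; induction w as [|b w IH]; simpl; intros f g H x t; auto.
  destruct b; unfold pDx, pDt; apply Derive_ext; intros; apply IH; auto.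
Qed.

Lemma smooth2_ext (f g : R -> R -> R) :
  (forall x t, f x t = g x t) -> smooth2 f -> smooth2 g.
Proof.
  intros H S w; destruct (S w) as [Ax [At C]]; repeat split; intros x t.
  - eapply (ex_derive_ext (K := R_AbsRing) (V := R_NormedModule)); [|apply Ax]; intros; simpl; apply iterD_ext; auto.
  - eapply (ex_derive_ext (K := R_AbsRing) (V := R_NormedModule)); [|apply At]; intros; simpl; apply iterD_ext; auto.
  - eapply continuity_2d_pt_ext; [|apply C]; intros; apply iterD_ext; auto.
Qed.

Lemma iterD_plus (f g : R -> R -> R) : smooth2 f -> smooth2 g ->
  forall w x t, iterD w (fun x t => f x t + g x t) x t = iterD w f x t + iterD w g x t.
Proof.
  intros Sf Sg w; induction w as [|b w IH]; simpl; intros x t; auto.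
  destruct (Sf w) as [Afx [Aft _]]; destruct (Sg w) as [Agx [Agt _]].
  destruct b; unfold pDx, pDt.
  - rewrite (Derive_ext _ (fun y => iterD w f y t + iterD w g y t)) by (intros; apply IH).
    apply Derive_plus; auto.
  - rewrite (Derive_ext _ (fun s => iterD w f x s + iterD w g x s)) by (intros; apply IH).
    apply Derive_plus; auto.
Qed.

Lemma iterD_scal (a : R) (f : R -> R -> R) :
  forall w x t, iterD w (fun x t => a * f x t) x t = a * iterD w f x t.
Proof.
  intros w; induction w as [|b w IH]; simpl; intros x t; auto.
  destruct b; unfold pDx, pDt.
  - rewrite (Derive_ext _ (fun y => a * iterD w f y t)) by (intros; apply IH).
    apply Derive_scal.
  - rewrite (Derive_ext _ (fun s => a * iterD w f x s)) by (intros; apply IH).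
    apply Derive_scal.
Qed.

Lemma iterD_pDx (w : list bool) (f : R -> R -> R) :
  iterD w (pDx f) = iterD (w ++ true :: nil) f.
Proof. induction w as [|b w IH]; simpl; auto; rewrite IH; auto. Qed.

Lemma iterD_pDt (w : list bool) (f : R -> R -> R) :
  iterD w (pDt f) = iterD (w ++ false :: nil) f.
Proof. induction w as [|b w IH]; simpl; auto; rewrite IH; auto. Qed.

Lemma smooth2_plus (f g : R -> R -> R) :
  smooth2 f -> smooth2 g -> smooth2 (fun x t => f x t + g x t).
Proof.
  intros Sf Sg w; destruct (Sf w) as [Afx [Aft Cf]]; destruct (Sg w) as [Agx [Agt Cg]].
  repeat split; intros x t.
  - eapply (ex_derive_ext (K := R_AbsRing) (V := R_NormedModule)); [intros; symmetry; apply iterD_plus; auto|].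
    apply (ex_derive_plus (K := R_AbsRing) (V := R_NormedModule)); auto.
  - eapply (ex_derive_ext (K := R_AbsRing) (V := R_NormedModule)); [intros; symmetry; apply iterD_plus; auto|].
    apply (ex_derive_plus (K := R_AbsRing) (V := R_NormedModule)); auto.
  - eapply continuity_2d_pt_ext; [intros; symmetry; apply iterD_plus; auto|].
    apply continuity_2d_pt_plus; auto.
Qed.

Lemma smooth2_scal (a : R) (f : R -> R -> R) :
  smooth2 f -> smooth2 (fun x t => a * f x t).
Proof.
  intros Sf w; destruct (Sf w) as [Ax [At C]]; repeat split; intros x t.
  - eapply (ex_derive_ext (K := R_AbsRing) (V := R_NormedModule)); [intros; symmetry; apply iterD_scal|].
    apply ex_derive_scal; auto.
  - eapply (ex_derive_ext (K := R_AbsRing) (V := R_NormedModule)); [intros; symmetry; apply iterD_scal|].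
    apply ex_derive_scal; auto.
  - eapply continuity_2d_pt_ext; [intros; symmetry; apply iterD_scal|].
    apply continuity_2d_pt_mult; auto; apply continuity_2d_pt_const.
Qed.

Lemma smooth2_opp (f : R -> R -> R) : smooth2 f -> smooth2 (fun x t => - f x t).
Proof.
  intros Sf; apply (smooth2_ext (fun x t => -1 * f x t)); [intros; ring|].
  apply smooth2_scal; assumption.
Qed.

Lemma smooth2_minus (f g : R -> R -> R) :
  smooth2 f -> smooth2 g -> smooth2 (fun x t => f x t - g x t).
Proof. intros Sf Sg; exact (smooth2_plus _ _ Sf (smooth2_opp _ Sg)). Qed.

Lemma smooth2_pDx (f : R -> R -> R) : smooth2 f -> smooth2 (pDx f).
Proof. intros S w; rewrite iterD_pDx; apply S. Qed.

Lemma smooth2_pDt (f : R -> R -> R) : smooth2 f -> smooth2 (pDt f).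
Proof. intros S w; rewrite iterD_pDt; apply S. Qed.

Ltac solve_smooth :=
  lazymatch goal with
  | |- smooth2 (fun _ _ => _ - _) => apply smooth2_minus; solve_smooth
  | |- smooth2 (fun _ _ => _ + _) => apply smooth2_plus; solve_smooth
  | |- smooth2 (fun _ _ => - _) => apply smooth2_opp; solve_smooth
  | |- smooth2 (fun _ _ => _ * _) => apply smooth2_scal; solve_smooth
  | |- smooth2 (fun _ _ => pDx _ _ _) => apply smooth2_pDx; solve_smooth
  | |- smooth2 (fun _ _ => pDt _ _ _) => apply smooth2_pDt; solve_smooth
  | |- smooth2 (pDx _) => apply smooth2_pDx; solve_smooth
  | |- smooth2 (pDt _) => apply smooth2_pDt; solve_smooth
  | |- smooth2 _ => assumption
  end.

Lemma pDx_ext (f g : R -> R -> R) (x t : R) :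
  (forall y s, f y s = g y s) -> pDx f x t = pDx g x t.
Proof. intros H; unfold pDx; apply Derive_ext; auto. Qed.

Lemma pDx_scal (a : R) (f : R -> R -> R) (x t : R) :
  pDx (fun y s => a * f y s) x t = a * pDx f x t.
Proof. apply Derive_scal. Qed.

Lemma pDx_opp (f : R -> R -> R) (x t : R) :
  pDx (fun y s => - f y s) x t = - pDx f x t.
Proof. apply Derive_opp. Qed.

Lemma pDt_scal (a : R) (f : R -> R -> R) (x t : R) :
  pDt (fun y s => a * f y s) x t = a * pDt f x t.
Proof. apply Derive_scal. Qed.

Lemma pDt_opp (f : R -> R -> R) (x t : R) :
  pDt (fun y s => - f y s) x t = - pDt f x t.
Proof. apply Derive_opp. Qed.

Lemma smooth2_ex_derive_x (h : R -> R -> R) (x t : R) :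
  smooth2 h -> ex_derive (fun y => h y t) x.
Proof. intros S; exact (proj1 (S nil) x t). Qed.

Section DifferentiationRules.

Variables f g : R -> R -> R.
Hypotheses (Sf : smooth2 f) (Sg : smooth2 g).

Lemma pDx_plus (x t : R) : pDx (fun y s => f y s + g y s) x t = pDx f x t + pDx g x t.
Proof. apply Derive_plus; apply smooth2_ex_derive_x; assumption. Qed.

Lemma pDx_minus (x t : R) : pDx (fun y s => f y s - g y s) x t = pDx f x t - pDx g x t.
Proof. apply Derive_minus; apply smooth2_ex_derive_x; assumption. Qed.

Lemma pDt_plus (x t : R) : pDt (fun y s => f y s + g y s) x t = pDt f x t + pDt g x t.
Proof. apply Derive_plus; [exact (proj1 (proj2 (Sf nil)) x t) | exact (proj1 (proj2 (Sg nil)) x t)]. Qed.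

Lemma pDx_mult (x t : R) :
  pDx (fun y s => f y s * g y s) x t = pDx f x t * g x t + f x t * pDx g x t.
Proof.
  apply (Derive_mult (fun y => f y t) (fun y => g y t));
    apply smooth2_ex_derive_x; assumption.
Qed.

Lemma pDx2_mult (x t : R) :
  pDx (pDx (fun y s => f y s * g y s)) x t =
  pDx (pDx f) x t * g x t + 2 * pDx f x t * pDx g x t + f x t * pDx (pDx g) x t.
Proof.
  assert (Sfx := smooth2_pDx _ Sf); assert (Sgx := smooth2_pDx _ Sg).
  rewrite (pDx_ext _ (fun y s => pDx f y s * g y s + f y s * pDx g y s))
    by (intros; apply pDx_mult).
  unfold pDx at 1.
  rewrite Derive_plus by
    (apply ex_derive_mult; apply smooth2_ex_derive_x; assumption).
  rewrite !(Derive_mult (fun y => _ y t) (fun y => _ y t))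
    by (apply smooth2_ex_derive_x; assumption).
  unfold pDx; ring.
Qed.

Lemma pDt_pDx (x t : R) : pDt (pDx f) x t = pDx (pDt f) x t.
Proof.
  unfold pDx, pDt; symmetry.
  destruct (Sf nil) as [Ax [At _]].
  destruct (Sf (false :: nil)) as [Atx _].
  destruct (Sf (true :: nil)) as [_ [Axt _]].
  destruct (Sf (true :: false :: nil)) as [_ [_ Ctx]].
  destruct (Sf (false :: true :: nil)) as [_ [_ Cxt]].
  apply Schwarz; [|apply Ctx|apply Cxt].
  exists (mkposreal 1 Rlt_0_1); intros; repeat split; [apply Ax|apply At|apply Atx|apply Axt].
Qed.

End DifferentiationRules.

Lemma momentum_transport (kappa beta : R) (m n w z : R -> R -> R) :
  smooth2 m -> smooth2 n -> smooth2 w ->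
  (forall x t, pDt m x t = 2 * m x t * pDx w x t + pDx m x t * w x t + n x t * pDx z x t) ->
  (forall x t, pDt n x t = pDx (fun y s => n y s * w y s) x t) ->
  let P := fun y s => kappa * pDx n y s + 2 * beta * n y s + m y s in
  forall x t, pDt P x t = w x t * pDx P x t + 2 * P x t * pDx w x t
    + n x t * (kappa * pDx (pDx w) x t - 2 * beta * pDx w x t + pDx z x t).
Proof.
  intros Sm Sn Sw Hm Hn P x t.
  assert (Pt : pDt P x t = kappa * pDt (pDx n) x t + 2 * beta * pDt n x t + pDt m x t).
  { unfold P; rewrite !pDt_plus, !pDt_scal by solve_smooth; reflexivity. }
  assert (Px : pDx P x t = kappa * pDx (pDx n) x t + 2 * beta * pDx n x t + pDx m x t).
  { unfold P; rewrite !pDx_plus, !pDx_scal by solve_smooth; reflexivity. }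
  assert (nxt : pDt (pDx n) x t = pDx (pDx (fun y s => n y s * w y s)) x t).
  { rewrite pDt_pDx by assumption; apply pDx_ext; apply Hn. }
  rewrite Pt, Px, nxt, Hn, Hm, pDx2_mult, pDx_mult by assumption.
  unfold P; ring.
Qed.

Section MiuraMap.

Variables (alpha beta kappa : R) (u v : R -> R -> R).
Hypotheses (Su : smooth2 u) (Sv : smooth2 v).

Lemma miura_source (Hk : kappa ^ 2 = 4 * (alpha + beta ^ 2)) (x t : R) :
  kappa * pDx (pDx (fun y s => kappa * pDx v y s + 2 * beta * v y s - u y s)) x t
  - 2 * beta * pDx (fun y s => kappa * pDx v y s + 2 * beta * v y s - u y s) x t
  + pDx (fun y s => kappa * pDx u y s - 2 * beta * u y s - 4 * alpha * v y s) x t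
  = - kappa ^ 2 * pDx (fun y s => v y s - pDx (pDx v) y s) x t.
Proof.
  assert (wx : forall y s,
    pDx (fun y s => kappa * pDx v y s + 2 * beta * v y s - u y s) y s
    = kappa * pDx (pDx v) y s + 2 * beta * pDx v y s - pDx u y s).
  { intros; rewrite pDx_minus, pDx_plus, !pDx_scal by solve_smooth; reflexivity. }
  rewrite (pDx_ext _ _ x t wx), wx.
  rewrite !pDx_minus, pDx_plus, !pDx_scal by solve_smooth.
  apply Rminus_diag_uniq.
  transitivity ((kappa ^ 2 - 4 * (alpha + beta ^ 2)) * pDx v x t); [ring|].
  rewrite Hk; ring.
Qed.

Lemma miura_momentum (x t : R) :
  - (kappa * pDx (fun y s => v y s - pDx (pDx v) y s) x t
     + 2 * beta * (v x t - pDx (pDx v) x t) + (pDx (pDx u) x t - u x t))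
  = (- kappa * pDx v x t - 2 * beta * v x t + u x t)
    - pDx (pDx (fun y s => - kappa * pDx v y s - 2 * beta * v y s + u y s)) x t.
Proof.
  assert (qx : forall y s,
    pDx (fun y s => - kappa * pDx v y s - 2 * beta * v y s + u y s) y s
    = - kappa * pDx (pDx v) y s - 2 * beta * pDx v y s + pDx u y s).
  { intros; rewrite pDx_plus, pDx_minus, !pDx_scal by solve_smooth; reflexivity. }
  rewrite (pDx_ext _ _ x t qx).
  rewrite !pDx_plus, !pDx_minus, !pDx_scal by solve_smooth.
  ring.
Qed.

End MiuraMap.

Theorem proposition2 (alpha beta kappa : R) (u v : R -> R -> R) :
  0 < kappa ->
  kappa ^ 2 = 4 * (alpha + beta ^ 2) ->
  smooth2 u -> smooth2 v ->
  let m := fun (x t : R) => pDx (pDx u) x t - u x t in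
  let n := fun (x t : R) => v x t - pDx (pDx v) x t in
  let w := fun (x t : R) => kappa * pDx v x t + 2 * beta * v x t - u x t in
  let z := fun (x t : R) => kappa * pDx u x t - 2 * beta * u x t - 4 * alpha * v x t in
  (forall x t, pDt m x t =
      2 * m x t * pDx w x t + pDx m x t * w x t + n x t * pDx z x t) ->
  (forall x t, pDt n x t = pDx (fun (y s : R) => n y s * w y s) x t) ->
  let p := fun (x t : R) => - (kappa * pDx n x t + 2 * beta * n x t + m x t) in
  let rho := fun (x t : R) => kappa * n x t in
  let q := fun (x t : R) => - kappa * pDx v x t - 2 * beta * v x t + u x t in
  forall x t,
    pDt p x t + q x t * pDx p x t + 2 * p x t * pDx q x t - rho x t * pDx rho x t = 0 /\
    pDt rho x t + pDx (fun (y s : R) => rho y s * q y s) x t = 0 /\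
    p x t = q x t - pDx (pDx q) x t.
Proof.
  intros _ Hk Su Sv m n w z Hm Hn p rho q x t.
  assert (Sm : smooth2 m) by (unfold m; solve_smooth).
  assert (Sn : smooth2 n) by (unfold n; solve_smooth).
  assert (Sw : smooth2 w) by (unfold w; solve_smooth).
  assert (qw : forall y s, q y s = - w y s) by (intros; unfold q, w; ring).
  assert (qx : pDx q x t = - pDx w x t) by (rewrite (pDx_ext _ _ x t qw); apply pDx_opp).
  assert (transport := momentum_transport kappa beta m n w z Sm Sn Sw Hm Hn x t).
  assert (source := miura_source alpha beta kappa u v Su Sv Hk x t).
  split; [|split].
  - unfold p at 1 2; rewrite pDt_opp, pDx_opp, transport, qx.
    unfold rho; rewrite pDx_scal.
    rewrite (qw x t); fold w z n in source.
    transitivity (- n x t * (kappa * pDx (pDx w) x t - 2 * beta * pDx w x t + pDx z x t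
                             + kappa ^ 2 * pDx n x t)); [unfold p; ring|].
    rewrite source; ring.
  - rewrite (pDx_ext (fun y s => rho y s * q y s) (fun y s => - kappa * (n y s * w y s)))
      by (intros; unfold rho; rewrite qw; ring).
    unfold rho at 1; rewrite pDt_scal, Hn, pDx_scal; ring.
  - exact (miura_momentum beta kappa u v Su Sv x t).
Qed.
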